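(* Let $\Omega$ be a finite set, $(H_i\mid i\in\Omega)$ finite abelian groups, $h_i=|H_i|$, $\mathbf{H}=\prod_{i\in\Omega}H_i$, $\mathbf{P}=(\Omega,\preccurlyeq_{\mathbf{P}})$ a poset. Let $\alpha\in\hat{\mathbf{H}}$ with $\langle\mathrm{supp}(\alpha)\rangle_{\overline{\mathbf{P}}}=D$, and let $I\in\mathcal{I}(\mathbf{P})$. Then $$\sum_{\beta\in\mathbf{H},\ \langle\mathrm{supp}(\beta)\rangle_{\mathbf{P}}=I}\alpha(\beta)=\begin{cases}(-1)^{|I\cap D|}\Big(\prod_{i\in I-\max_{\mathbf{P}}(I)}h_i\Big)\Big(\prod_{i\in\max_{\mathbf{P}}(I)-D}(h_i-1)\Big),& I\cap D\subseteq\max_{\mathbf{P}}(I);\\ 0,& I\cap D\not\subseteq\max_{\mathbf{P}}(I).\end{cases}$$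
   Context: $\hat{\mathbf{H}}$ is the character group of $\mathbf{H}$, identified with $\prod_i\hat{H_i}$ via $\alpha(\beta)=\prod_i\alpha_{(i)}(\beta_{(i)})$; $\mathrm{supp}$ of a codeword is the set of coordinates where it is not the identity. $\mathcal{I}(\mathbf{P})$ is the set of ideals (down-closed subsets) of $\mathbf{P}$; $\max_{\mathbf{P}}(I)$ is the set of maximal elements of $I$. For a poset $\mathbf{Q}$ on $\Omega$, $\langle B\rangle_{\mathbf{Q}}=\{a:\exists b\in B, a\preccurlyeq_{\mathbf{Q}}b\}$. $\overline{\mathbf{P}}$ is the dual poset ($u\preccurlyeq_{\overline{\mathbf{P}}}v\iff v\preccurlyeq_{\mathbf{P}}u$). *)

From HB Require Import structures.
From mathcomp Require Import all_boot all_order all_algebra all_field.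
Set Implicit Arguments. Unset Strict Implicit. Unset Printing Implicit Defensive.
Import Order.TTheory GRing.Theory Num.Theory.
Local Open Scope ring_scope.
Local Open Scope order_scope.

Definition down_gen d (Omega : finPOrderType d) (B : {set Omega}) : {set Omega} :=
  [set a | [exists b in B, (a <= b)%O]].

(* <B>_{dual P} : downward closure in the dual poset = upward closure in P *)
Definition up_gen d (Omega : finPOrderType d) (B : {set Omega}) : {set Omega} :=
  [set a | [exists b in B, (b <= a)%O]].

Definition is_ideal d (Omega : finPOrderType d) (I : {set Omega}) : bool :=
  [forall a, forall b, (b \in I) && (a <= b)%O ==> (a \in I)].

Definition maxP d (Omega : finPOrderType d) (I : {set Omega}) : {set Omega} :=
  [set i in I | [forall j in I, (i <= j)%O ==> (j == i)]].

Definition is_character (G : finZmodType) (chi : G -> algC) : Prop :=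
  chi 0%R = 1%R /\ forall x y : G, chi (x + y)%R = (chi x * chi y)%R.

Definition supp_word d (Omega : finPOrderType d) (H : Omega -> finZmodType)
  (beta : {dffun forall i, H i}) : {set Omega} :=
  [set i | beta i != 0%R].

Definition supp_char d (Omega : finPOrderType d) (H : Omega -> finZmodType)
  (alpha : forall i, H i -> algC) : {set Omega} :=
  [set i | ~~ [forall x : H i, alpha i x == 1%R]].

Definition char_eval d (Omega : finPOrderType d) (H : Omega -> finZmodType)
  (alpha : forall i, H i -> algC) (beta : {dffun forall i, H i}) : algC :=
  (\prod_(i : Omega) alpha i (beta i))%R.

From HB Require Import structures.
From mathcomp Require Import all_boot all_order all_algebra all_field.
Import Order.TTheory GRing.Theory Num.Theory.
Local Open Scope ring_scope.

(* The condition <supp beta>_P = I is coordinatewise: beta_i vanishes off I,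
   is nonzero on max_P(I) and is free on the rest of I.  Hence the sum factors
   into one-dimensional character sums, which are 1 off I, h_i or 0 on
   I - max_P(I), and h_i - 1 or -1 on max_P(I), according as alpha_(i) is
   trivial or not.  A coordinate j of supp(alpha) below some i in I :&: D lies
   in I, so I :&: D escapes max_P(I) exactly when some non-maximal j in I
   carries a nontrivial character, which kills the product; otherwise the
   characters are trivial precisely off D. *)

Lemma prodr_if0 {R : comNzRingType} {I : finType} (b : pred I) (a : I -> R) :
  \prod_i (if b i then a i else 0) = if [forall i, b i] then \prod_i a i else 0.
Proof.
case: forallP => [bT | /forallP/forallPn[i /negbTE bNi]].
  by apply: eq_bigr => i _; rewrite bT.
by rewrite (bigD1 i) //= bNi mul0r.
Qed.

Lemma sum_dffun_prod {R : comNzRingType} {I : finType} {T_ : I -> finType}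
    (F : forall i, T_ i -> R) :
  \sum_(b : {dffun forall i, T_ i}) \prod_i F i (b i) =
  \prod_i \sum_(x : T_ i) F i x.
Proof.
pose P_ i := [ffun x : T_ i => F i x].
transitivity (\prod_i \sum_(x : T_ i) P_ i x); last first.
  by apply: eq_bigr => i _; apply: eq_bigr => x _; rewrite ffunE.
under eq_bigr do rewrite (big_tag P_).
rewrite bigA_distr_big_dep -(big_fprod _ _ P_).
rewrite (reindex (@dffun_of_fprod I T_)); last exact/onW_bij/dffun_of_fprod_bij.
by apply: eq_bigr => t _; apply: eq_bigr => i _; rewrite !ffunE.
Qed.

Lemma sum_dffun_prod_cond {R : comNzRingType} {I : finType} {T_ : I -> finType}
    (P : forall i, pred (T_ i)) (F : forall i, T_ i -> R) :
  \sum_(b : {dffun forall i, T_ i} | [forall i, P i (b i)]) \prod_i F i (b i) =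
  \prod_i \sum_(x | P i x) F i x.
Proof.
rewrite big_mkcond.
under eq_bigr => b _ do rewrite -(prodr_if0 (fun i => P i (b i))).
rewrite (sum_dffun_prod (fun i x => if P i x then F i x else 0)).
by apply: eq_bigr => i _; rewrite -big_mkcond.
Qed.

Definition trivial_char {G : finZmodType} (chi : G -> algC) : bool :=
  [forall x, chi x == 1].

Lemma sum_char (G : finZmodType) (chi : G -> algC) : is_character chi ->
  \sum_x chi x = if trivial_char chi then #|G|%:R else 0.
Proof.
move=> [_ chiD]; rewrite /trivial_char.
case: forallP => [chi1 | /forallP/forallPn[y chiy]].
  by rewrite (eq_bigr (fun _ => 1)) ?sumr_const // => x _; apply/eqP.
have sum_shift : \sum_x chi x = chi y * \sum_x chi x.
  rewrite mulr_sumr (reindex_inj (addrI y)) /=.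
  by apply: eq_bigr => x _; rewrite chiD.
apply/eqP; move/eqP: sum_shift; rewrite -subr_eq0 -{1}[\sum_x chi x]mul1r -mulrBl.
by rewrite mulf_eq0 subr_eq0 eq_sym (negbTE chiy).
Qed.

Lemma sum_char_neq0 (G : finZmodType) (chi : G -> algC) : chi 0 = 1 ->
  \sum_(x | x != 0) chi x = \sum_x chi x - 1.
Proof. by move=> chi0; rewrite [X in _ = X - _](bigD1 0) //= chi0 addrC addrK. Qed.

Section IdealsOfFinitePosets.
Context {d : Order.disp_t} {Omega : finPOrderType d}.
Implicit Types (I S : {set Omega}) (a b m : Omega).
Open Scope order_scope.

Lemma idealP {I} : is_ideal I -> forall a b, b \in I -> a <= b -> a \in I.
Proof.
by move=> /forallP idI a b bI ab; move/forallP/(_ b): (idI a); rewrite bI ab.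
Qed.

Lemma maxP_sub I : maxP I \subset I.
Proof. by apply/subsetP => i; rewrite inE => /andP[]. Qed.

Lemma maxP_ge_eq {I m a} : m \in maxP I -> a \in I -> m <= a -> a = m.
Proof.
by rewrite inE => /andP[_ /forall_inP mmax] aI /(implyP (mmax a aI)) /eqP.
Qed.

Lemma exists_maxP_ge {I a} : a \in I -> exists2 m, m \in maxP I & a <= m.
Proof.
move=> aI; have aIa : (a \in I) && (a <= a) by rewrite aI lexx.
pose down m := [set k | k <= m].
have [m /andP[mI am] mmax] :=
  @arg_maxnP _ a [pred k | (k \in I) && (a <= k)] (fun m => #|down m|) aIa.
exists m => //; rewrite inE mI; apply/forall_inP => j jI; apply/implyP => mj.
apply/contraT => jNm; suff : (#|down m| < #|down j|)%N.
  by rewrite ltnNge; move: (mmax j); rewrite inE jI (le_trans am mj) /= => ->.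
apply: proper_card; apply/properP; split.
  by apply/subsetP => k; rewrite !inE => km; apply: le_trans km mj.
exists j; rewrite !inE ?lexx //; apply: contra jNm => jm.
by apply/eqP/le_anti; rewrite jm mj.
Qed.

Lemma mem_up_gen {S a} : a \in S -> a \in up_gen S.
Proof. by move=> aS; rewrite inE; apply/existsP; exists a; rewrite aS lexx. Qed.

Lemma mem_down_gen {S a} : a \in S -> a \in down_gen S.
Proof. by move=> aS; rewrite inE; apply/existsP; exists a; rewrite aS lexx. Qed.

Lemma down_gen_eq_ideal I S : is_ideal I ->
  (down_gen S == I) = (S \subset I) && (maxP I \subset S).
Proof.
move=> idI; apply/eqP/andP => [<- | [SI maxS]].
  split; apply/subsetP => m; first exact: mem_down_gen.
  move=> mmax; move: (subsetP (maxP_sub _) m mmax).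
  rewrite inE => /existsP[b /andP[bS mb]].
  by rewrite -(maxP_ge_eq mmax (mem_down_gen bS) mb).
apply/setP => a; rewrite inE; apply/existsP/idP => [[b /andP[bS ab]] | aI].
  exact: idealP idI _ _ (subsetP SI b bS) ab.
by have [m mmax am] := exists_maxP_ge aI; exists m; rewrite am (subsetP maxS).
Qed.

End IdealsOfFinitePosets.

Section CharacterSumsOverIdeals.
Context {d : Order.disp_t} {Omega : finPOrderType d} {H : Omega -> finZmodType}.
Context {alpha : forall i, H i -> algC}.
Hypothesis alpha_char : forall i, is_character (alpha i).
Local Notation D := (up_gen (supp_char alpha)).
Local Notation h i := (#|H i|%:R : algC).

Definition admissible_coord (I : {set Omega}) {i} (x : H i) : bool :=
  if i \in maxP I then x != 0 else (i \in I) || (x == 0).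

Lemma down_gen_supp_wordE (I : {set Omega}) (beta : {dffun forall i, H i}) :
  is_ideal I ->
  (down_gen (supp_word beta) == I) = [forall i, admissible_coord I (beta i)].
Proof.
move=> idI; rewrite down_gen_eq_ideal //.
apply/andP/forallP => [[suppI maxsupp] i | adm].
  rewrite /admissible_coord; case: ifP => [/(subsetP maxsupp)|_]; first by rewrite inE.
  case: (boolP (i \in I)) => //= iNI; apply: contraR iNI => bi.
  by apply: (subsetP suppI); rewrite inE.
split; apply/subsetP => i; move: (adm i); rewrite /admissible_coord.
  case: ifP => [/(subsetP (maxP_sub I)) // | _ /orP[// | /eqP bi0]].
  by rewrite inE bi0 eqxx.
by move=> + imax; rewrite imax inE.
Qed.

Lemma sum_char_eval_ideal (I : {set Omega}) : is_ideal I ->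
  \sum_(beta : {dffun forall i, H i} | down_gen (supp_word beta) == I)
    char_eval alpha beta =
  \prod_i \sum_(x | admissible_coord I x) alpha i x.
Proof.
move=> idI; rewrite -sum_dffun_prod_cond.
by apply: eq_bigl => beta; apply: down_gen_supp_wordE.
Qed.

Lemma sum_admissible_coord (I : {set Omega}) i :
  \sum_(x | admissible_coord I x) alpha i x =
  if i \in maxP I then (if trivial_char (alpha i) then h i else 0) - 1
  else if i \in I then (if trivial_char (alpha i) then h i else 0) else 1.
Proof.
have [alpha0 _] := alpha_char i; rewrite /admissible_coord -sum_char //.
case: ifP => _; first exact: sum_char_neq0.
by case: (i \in I); rewrite /= ?big_pred1_eq.
Qed.

Lemma trivial_char_notin_up_gen {i} : i \notin D -> trivial_char (alpha i).
Proof. by apply: contraR => ntriv; apply: mem_up_gen; rewrite inE. Qed.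

Lemma up_gen_supp_char_ideal {I i} : is_ideal I -> i \in I -> i \in D ->
  exists j, [/\ j \in I, ~~ trivial_char (alpha j) & (j <= i)%O].
Proof.
move=> idI iI; rewrite inE => /existsP[j /andP[jsupp ji]].
by exists j; split => //; [exact: idealP idI _ _ iI ji | rewrite inE in jsupp].
Qed.

Lemma trivial_char_maxP {I i} : is_ideal I -> I :&: D \subset maxP I ->
  i \in maxP I -> trivial_char (alpha i) = (i \notin D).
Proof.
move=> idI ID_max imax; have iI := subsetP (maxP_sub I) i imax.
apply/idP/idP; last exact: trivial_char_notin_up_gen.
apply: contraL => iD; have [j [jI ntj ji]] := up_gen_supp_char_ideal idI iI iD.
have jmax : j \in maxP I.
  by apply: (subsetP ID_max); rewrite in_setI jI; apply: mem_up_gen; rewrite inE.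
by rewrite (maxP_ge_eq jmax iI ji).
Qed.

Lemma sum_admissible_coord_split I i : is_ideal I -> I :&: D \subset maxP I ->
  \sum_(x | admissible_coord I x) alpha i x =
  (if i \in I :&: D then -1 else 1) * (if i \in maxP I :\: D then h i - 1 else 1) *
  (if i \in I :\: maxP I then h i else 1).
Proof.
move=> idI ID_max; rewrite sum_admissible_coord !in_setI !in_setD.
have [imax | iNmax] := boolP (i \in maxP I).
  rewrite (subsetP (maxP_sub I) i imax) (trivial_char_maxP idI ID_max imax).
  by case: (i \in D); rewrite /= ?mulr1 ?mul1r ?sub0r.
have [iI | iNI] := boolP (i \in I); last by rewrite andbF !mulr1.
have iND : i \notin D.
  by apply: contra iNmax => iD; apply: (subsetP ID_max); rewrite in_setI iI.
by rewrite (negbTE iND) (trivial_char_notin_up_gen iND) !mul1r.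
Qed.

Lemma exists_nontrivial_nonmax {I} : is_ideal I -> ~~ (I :&: D \subset maxP I) ->
  exists2 j, j \in I :\: maxP I & ~~ trivial_char (alpha j).
Proof.
move=> idI /subsetPn[i]; rewrite in_setI => /andP[iI iD] iNmax.
have [j [jI ntj ji]] := up_gen_supp_char_ideal idI iI iD.
exists j => //; rewrite in_setD jI andbT; apply: contra iNmax => jmax.
by rewrite (maxP_ge_eq jmax iI ji).
Qed.

End CharacterSumsOverIdeals.

Theorem proposition2p1 (d : Order.disp_t) (Omega : finPOrderType d)
  (H : Omega -> finZmodType) (alpha : forall i, H i -> algC)
  (Halpha : forall i, is_character (alpha i))
  (D : {set Omega}) (HD : up_gen (supp_char alpha) = D)
  (I : {set Omega}) (HI : is_ideal I) :
  \sum_(beta : {dffun forall i, H i} | down_gen (supp_word beta) == I)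
      char_eval alpha beta =
  if I :&: D \subset maxP I then
    (-1) ^+ #|I :&: D| *
    (\prod_(i in I :\: maxP I) (#|H i|%:R : algC)) *
    (\prod_(i in maxP I :\: D) ((#|H i|%:R : algC) - 1))
  else 0.
Proof.
subst D; rewrite sum_char_eval_ideal //; case: ifP => [ID_max | /negbT ID_Nmax].
  under eq_bigr do rewrite sum_admissible_coord_split //.
  by rewrite !big_split /= -!big_mkcond prodr_const mulrAC.
have [j jI_Nmax ntj] := exists_nontrivial_nonmax HI ID_Nmax.
move: jI_Nmax; rewrite in_setD => /andP[jNmax jI].
by rewrite (bigD1 j) //= sum_admissible_coord // (negbTE jNmax) jI (negbTE ntj) mul0r.
Qed.
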